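(* Let $M=(I,T)$ be a symbolic transition system with $T = A_1 \vee \dots \vee A_k$, and let $(V_L \cup V_A, E)$ be an inductive proof graph for $M$ that is valid. Suppose that $I \Rightarrow L$ holds for every $L \in V_L$. Then every $L \in V_L$ is an invariant of $M$, i.e. $L$ holds in every reachable state of $M$.
   Context: A symbolic transition system $M=(I,T)$ consists of a state predicate $I$ (initial states) over a finite set of state variables and a transition relation $T$, a predicate over current-state variables and primed next-state copies of them; for a state predicate $P$, $P'$ denotes $P$ with every state variable replaced by its primed version. The transition relation is a disjunction of actions, $T = A_1 \vee \dots \vee A_k$. The behaviors of $M$ are sequences of states $\sigma_1 \to \sigma_2 \to \cdots$ with $\sigma_1$ satisfying $I$ and every pair $(\sigma_i,\sigma_{i+1})$ satisfying $T$; a state is reachable if it occurs in some behavior; an invariant is a state predicate true in every reachable state. An inductive proof graph for $M$ is a directed graph $(V,E)$ with $V = V_L \cup V_A$, where $V_L$ (lemma nodes) is a set of state predicates over $M$, $V_A = V_L \times \{A_1,\dots,A_k\}$ (action nodes), and $E \subseteq V_L \times V_A$ (lemma support edges). For an action node $(L,A)$, its support set is $Supp_{(L,A)} = \{\ell \in V_L : (\ell,(L,A)) \in E\}$; the action node is locally valid if $\left(\bigwedge_{\ell \in Supp_{(L,A)}} \ell\right) \wedge L \wedge A \Rightarrow L'$ is valid. A lemma node $L$ is locally valid if all action nodes $(L,A_1),\dots,(L,A_k)$ are locally valid. The graph is valid if every lemma node in $V_L$ is locally valid. *)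

Definition pred (S : Type) := S -> Prop.
Definition action (S : Type) := S -> S -> Prop.

(* Symbolic transition system M = (I, T) with T = A_0 \/ ... \/ A_{k-1}
   (actions indexed by i < k). *)
Record TS (S : Type) := mkTS {
  ts_init : pred S;
  ts_k : nat;
  ts_act : nat -> action S   (* only indices i < ts_k are meaningful *)
}.
Arguments ts_init {S}. Arguments ts_k {S}. Arguments ts_act {S}.

Definition ts_next {S} (M : TS S) (s t : S) : Prop :=
  exists i, i < ts_k M /\ ts_act M i s t.

(* Behaviors: finite prefixes sigma_1 -> ... -> sigma_n; a state is reachable
   iff it occurs in some behavior, i.e. iff it is reachable from an initial
   state by finitely many T-steps. *)
Inductive reachable {S} (M : TS S) : S -> Prop :=
| reach_init : forall s, ts_init M s -> reachable M s
| reach_step : forall s t, reachable M s -> ts_next M s t -> reachable M t.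

Definition invariant {S} (M : TS S) (P : pred S) : Prop :=
  forall s, reachable M s -> P s.

(* Inductive proof graph: lemma nodes VL (a set of state predicates);
   action nodes are pairs (L, i) with L in VL and i < k;
   edges E ell L i : the lemma ell supports the action node (L, A_i). *)
Record proof_graph {S} (M : TS S) := mkPG {
  pg_VL : pred S -> Prop;
  pg_E : pred S -> pred S -> nat -> Prop;
  pg_E_wf : forall ell L i, pg_E ell L i -> pg_VL ell /\ pg_VL L /\ i < ts_k M
}.
Arguments pg_VL {S M}. Arguments pg_E {S M}.

Definition supp {S} {M : TS S} (G : proof_graph M) (L : pred S) (i : nat)
  : pred S -> Prop :=
  fun ell => pg_VL G ell /\ pg_E G ell L i.

Definition action_node_valid {S} {M : TS S} (G : proof_graph M)
  (L : pred S) (i : nat) : Prop :=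
  forall s t : S,
    (forall ell, supp G L i ell -> ell s) ->
    L s -> ts_act M i s t -> L t.

Definition lemma_node_valid {S} {M : TS S} (G : proof_graph M) (L : pred S)
  : Prop :=
  forall i, i < ts_k M -> action_node_valid G L i.

Definition graph_valid {S} {M : TS S} (G : proof_graph M) : Prop :=
  forall L, pg_VL G L -> lemma_node_valid G L.

(* The conjunction of all lemma nodes holds initially, and validity of the
   graph makes it inductive: at a step by A_i from a state satisfying every
   lemma, the supports of each action node (L, A_i) hold, so L holds after the
   step. *)


Lemma inductive_invariant {S} (M : TS S) (P : pred S) :
  (forall s, ts_init M s -> P s) ->
  (forall s t, P s -> ts_next M s t -> P t) ->
  invariant M P.
Proof.
  intros Hinit Hstep s Hreach.
  induction Hreach as [s Hs | s t _ IH Hst].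
  - exact (Hinit s Hs).
  - exact (Hstep s t IH Hst).
Qed.

Definition all_lemmas {S} {M : TS S} (G : proof_graph M) : pred S :=
  fun s => forall L, pg_VL G L -> L s.

Lemma graph_valid_all_lemmas_step {S} {M : TS S} (G : proof_graph M) :
  graph_valid G ->
  forall s t, all_lemmas G s -> ts_next M s t -> all_lemmas G t.
Proof.
  intros Hvalid s t Hs [i [Hi Hact]] L HL.
  apply (Hvalid L HL i Hi s t).
  - intros ell [Hell _]. exact (Hs ell Hell).
  - exact (Hs L HL).
  - exact Hact.
Qed.

Theorem theorem4p6 (S : Type) (M : TS S) (G : proof_graph M) :
  graph_valid G ->
  (forall L, pg_VL G L -> forall s, ts_init M s -> L s) ->
  forall L, pg_VL G L -> invariant M L.
Proof.
  intros Hvalid Hinit L HL s Hreach.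
  assert (Hall : invariant M (all_lemmas G)).
  { apply inductive_invariant.
    - intros s' Hs' L' HL'. exact (Hinit L' HL' s' Hs').
    - exact (graph_valid_all_lemmas_step G Hvalid). }
  exact (Hall s Hreach L HL).
Qed.
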